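(* Let $\mathcal{H}$ be a complex Hilbert space and $B,C\in\mathcal{B}(\mathcal{H})$. Then $$w^2\left(\begin{bmatrix}0 & B\\ C & 0\end{bmatrix}\right)\ge \frac18\Big[\max\{\|B+C^*\|^2,\|B-C^*\|^2\}+\|B+C^*\|\,\|B-C^*\|\Big]\ge \frac14\max\left\{\big\||B|^2+|C^*|^2\big\|,\ \big\||B^*|^2+|C|^2\big\|\right\}.$$
   Context: $\mathcal{B}(\mathcal{H})$ is the algebra of bounded linear operators on $\mathcal{H}$ with operator norm $\|\cdot\|$. For $A\in\mathcal{B}(\mathcal{H})$, $A^*$ is the adjoint, $|A|=(A^*A)^{1/2}$, $|A^*|=(AA^* )^{1/2}$, and $w(A)=\sup_{\|x\|=1}|\langle Ax,x\rangle|$ is the numerical radius. The operator matrix $\begin{bmatrix}A&B\\C&D\end{bmatrix}$ acts on $\mathcal{H}\oplus\mathcal{H}$ by $(x_1,x_2)\mapsto(Ax_1+Bx_2,\,Cx_1+Dx_2)$; $0$ denotes the zero operator. *)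

From HB Require Import structures.
From mathcomp Require Import all_boot all_order all_algebra.
From mathcomp Require Import complex.
From mathcomp Require Import classical_sets reals.
Set Implicit Arguments. Unset Strict Implicit. Unset Printing Implicit Defensive.
Import Order.TTheory GRing.Theory Num.Theory.
Local Open Scope ring_scope.
Local Open Scope classical_set_scope.

Section Hilbert.
Variable R : realType.
Local Notation C := (R[i]).

Definition cabs (z : C) : R := Normc.normc z.

Variable H : lmodType C.

Definition is_inner_product (ip : H -> H -> C) : Prop :=
  [/\ (forall (a : C) (x y z : H), ip (a *: x + y) z = a * ip x z + ip y z),
      (forall x y : H, ip x y = (ip y x)^*),
      (forall x : H, 0 <= ip x x) &
      (forall x : H, ip x x = 0 -> x = 0)].

Definition hnorm (ip : H -> H -> C) (x : H) : R := Num.sqrt (complex.Re (ip x x)).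

Definition ip_complete (ip : H -> H -> C) : Prop :=
  forall u : nat -> H,
    (forall e : R, 0 < e -> exists N : nat, forall m n : nat,
        (N <= m)%N -> (N <= n)%N -> hnorm ip (u m - u n) < e) ->
    exists l : H, forall e : R, 0 < e -> exists N : nat, forall n : nat,
        (N <= n)%N -> hnorm ip (u n - l) < e.

Definition is_hilbert (ip : H -> H -> C) : Prop :=
  is_inner_product ip /\ ip_complete ip.

Definition bounded_op (ip : H -> H -> C) (T : H -> H) : Prop :=
  (forall (a : C) (x y : H), T (a *: x + y) = a *: T x + T y) /\
  exists M : R, forall x : H, hnorm ip (T x) <= M * hnorm ip x.

Definition is_adjoint (ip : H -> H -> C) (T Ts : H -> H) : Prop :=
  forall x y : H, ip (T x) y = ip x (Ts y).

Definition opnorm (ip : H -> H -> C) (T : H -> H) : R :=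
  sup [set hnorm ip (T x) | x in [set x : H | hnorm ip x <= 1]].

End Hilbert.

Definition numrad (R : realType) (T : Type) (ip : T -> T -> R[i]) (nrm : T -> R)
  (A : T -> T) : R :=
  sup [set cabs (ip (A x) x) | x in [set x : T | nrm x = 1]].

Definition ip2 (R : realType) (H : lmodType R[i]) (ip : H -> H -> R[i])
  (x y : H * H) : R[i] := ip x.1 y.1 + ip x.2 y.2.

Definition hnorm2 (R : realType) (H : lmodType R[i]) (ip : H -> H -> R[i])
  (x : H * H) : R := Num.sqrt (complex.Re (ip2 ip x x)).

(** the operator matrix [A B; C D] acting on H (+) H *)
Definition opmx (R : realType) (H : lmodType R[i]) (A B C D : H -> H)
  (x : H * H) : H * H := (A x.1 + B x.2, C x.1 + D x.2).

Definition opcomp (H : Type) (S T : H -> H) : H -> H := fun x => S (T x).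
Definition opadd (R : realType) (H : lmodType R[i]) (S T : H -> H) : H -> H :=
  fun x => S x + T x.
Definition opsub (R : realType) (H : lmodType R[i]) (S T : H -> H) : H -> H :=
  fun x => S x - T x.
Definition opzero (R : realType) (H : lmodType R[i]) : H -> H := fun _ => 0.

(** First inequality: [<T (u, z), (u, z)> = <B z, u> + <u, Cs z>] is bounded by
    [w (||u||^2 + ||z||^2)].  For a unit [z], testing with a unit [u] such that
    [<(B + Cs) z, u> = ||(B + Cs) z||] gives [p <= 2 w]; testing with [-i u],
    where [u] norms [(B - Cs) z], gives [m <= 2 w].  Hence [max + p m <= 8 w^2].

    Second inequality: [2 (Bs B + C Cs) = (Bs + C)(B + Cs) + (Bs - C)(B - Cs)],
    where [Bs + C] and [Bs - C] are the adjoints of [B + Cs] and [B - Cs]; so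
    [||Bs B + C Cs|| <= (p^2 + m^2) / 2], and symmetrically for [B Bs + Cs C].
    It remains to note [p^2 + m^2 <= max(p^2, m^2) + p m]. *)

From HB Require Import structures.
From mathcomp Require Import all_boot all_order all_algebra.
From mathcomp Require Import complex.
From mathcomp Require Import boolp classical_sets reals.
From mathcomp Require Import ring lra.
Import Order.TTheory GRing.Theory Num.Theory.
Set Implicit Arguments. Unset Strict Implicit. Unset Printing Implicit Defensive.
Local Open Scope complex_scope.
Local Open Scope ring_scope.

Section ComplexFacts.
Variable R : realType.
Implicit Types (z : R[i]) (r : R).

Lemma Re_conj z : complex.Re z^* = complex.Re z.
Proof. by case: z. Qed.

Lemma conjC_realC r : (r%:C)^* = r%:C.
Proof. by rewrite /= /real_complex_def /=; congr (_ +i* _); rewrite oppr0. Qed.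

Lemma conjC_iC : ('i%C)^* = - 'i%C :> R[i].
Proof. by rewrite /=; congr (_ +i* _); rewrite oppr0. Qed.

Lemma Re_realCM r z : complex.Re (r%:C * z) = r * complex.Re z.
Proof. by case: z => a b /=; ring. Qed.

Lemma Re_NiM z : complex.Re (- 'i%C * z) = complex.Im z.
Proof. by case: z => a b /=; ring. Qed.

Lemma mulC_conjC z : z * z^* = (cabs z ^+ 2)%:C.
Proof.
case: z => a b; rewrite /cabs /= sqr_sqrtr ?addr_ge0 ?sqr_ge0 //.
by congr (_ +i* _); ring.
Qed.

Lemma cabs0 : cabs 0 = 0 :> R.
Proof. exact: Normc.normc0. Qed.

Lemma cabsM z w : cabs (z * w) = cabs z * cabs w.
Proof. exact: Normc.normcM. Qed.

Lemma cabs_ge0 z : 0 <= cabs z.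
Proof. by case: z => a b; rewrite /cabs /= sqrtr_ge0. Qed.

Lemma Re_le_cabs z : complex.Re z <= cabs z.
Proof.
case: z => a b; rewrite /cabs /=; apply: le_trans (ler_norm a) _.
by rewrite -sqrtr_sqr ler_sqrt ?addr_ge0 ?sqr_ge0 // lerDl sqr_ge0.
Qed.

Lemma cabs_le_l1 z : cabs z <= `|complex.Re z| + `|complex.Im z|.
Proof.
case: z => a b; rewrite /cabs /=.
rewrite -[X in _ <= X]ger0_norm ?addr_ge0 ?normr_ge0 // -sqrtr_sqr.
rewrite ler_sqrt ?sqr_ge0 // sqrrD !real_normK ?num_real //.
by have := mulr_ge0 (normr_ge0 a) (normr_ge0 b); rewrite mulr2n; lra.
Qed.

Lemma cabs_realC r : cabs r%:C = `|r|.
Proof. by rewrite /cabs /= expr0n /= addr0 sqrtr_sqr. Qed.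

Lemma cabs_iC : cabs 'i%C = 1 :> R.
Proof. by rewrite /cabs /= expr0n /= add0r expr1n sqrtr1. Qed.

Lemma cabs_NiC : cabs (- 'i%C) = 1 :> R.
Proof. by rewrite /cabs /= oppr0 expr0n /= add0r sqrrN expr1n sqrtr1. Qed.

Lemma cabs_N1 : cabs (-1) = 1 :> R.
Proof. by rewrite /cabs /= oppr0 expr0n /= addr0 sqrrN expr1n sqrtr1. Qed.

End ComplexFacts.

Section InnerProduct.
Variable R : realType.
Variable V : lmodType R[i].
Variable ip : V -> V -> R[i].
Hypothesis hip : is_inner_product ip.
Local Notation N := (hnorm ip).
Local Notation Re := complex.Re.
Implicit Types x y z : V.

Definition sqnorm x : R := Re (ip x x).

Lemma ipDl x y z : ip (x + y) z = ip x z + ip y z.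
Proof. by case: hip => lin _ _ _; rewrite -[x in LHS]scale1r lin mul1r. Qed.

Lemma ip0l z : ip 0 z = 0.
Proof. by apply: (addrI (ip 0 z)); rewrite -ipDl !addr0. Qed.

Lemma ipZl a x z : ip (a *: x) z = a * ip x z.
Proof. by case: hip => lin _ _ _; rewrite -[a *: x]addr0 lin ip0l addr0. Qed.

Lemma ipBl x y z : ip (x - y) z = ip x z - ip y z.
Proof. by rewrite ipDl -scaleN1r ipZl mulN1r. Qed.

Lemma ipC x y : ip x y = (ip y x)^*.
Proof. by case: hip. Qed.

Lemma ip0r z : ip z 0 = 0.
Proof. by rewrite ipC ip0l conjC0. Qed.

Lemma ipDr z x y : ip z (x + y) = ip z x + ip z y.
Proof. by rewrite ipC ipDl rmorphD /= -!ipC. Qed.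

Lemma ipZr a z x : ip z (a *: x) = a^* * ip z x.
Proof. by rewrite ipC ipZl rmorphM /= -ipC. Qed.

Lemma ipBr z x y : ip z (x - y) = ip z x - ip z y.
Proof. by rewrite ipC ipBl rmorphB /= -!ipC. Qed.

Lemma Re_ipC x y : Re (ip x y) = Re (ip y x).
Proof. by rewrite ipC Re_conj. Qed.

Lemma ipxx x : ip x x = (sqnorm x)%:C.
Proof.
case: hip => _ _ ge0 _; move: (ge0 x); rewrite /sqnorm.
by case: (ip x x) => a b; rewrite lecE /= => /andP[/eqP ->].
Qed.

Lemma sqnorm_ge0 x : 0 <= sqnorm x.
Proof. by case: hip => _ _ ge0 _; move: (ge0 x); rewrite lecE => /andP[]. Qed.

Lemma sqnorm_eq0 x : sqnorm x = 0 -> x = 0.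
Proof. by case: hip => _ _ _ def0 e; apply: def0; rewrite ipxx e. Qed.

Lemma hnorm_ge0 x : 0 <= N x.
Proof. exact: sqrtr_ge0. Qed.

Lemma hnorm_sq x : N x ^+ 2 = sqnorm x.
Proof. by rewrite sqr_sqrtr // sqnorm_ge0. Qed.

Lemma hnorm0 : N 0 = 0.
Proof. by rewrite /hnorm ip0l sqrtr0. Qed.

Lemma hnorm_gt0 x : x != 0 -> 0 < N x.
Proof.
move=> x0; rewrite lt_def hnorm_ge0 andbT; apply: contraNneq x0 => Nx0.
by apply/eqP/sqnorm_eq0; rewrite -hnorm_sq Nx0 expr0n.
Qed.

Lemma sqnormD x y : sqnorm (x + y) = sqnorm x + sqnorm y + 2 * Re (ip x y).
Proof. by rewrite /sqnorm ipDl !ipDr !raddfD /= (Re_ipC y x); ring. Qed.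

Lemma sqnormZ a x : sqnorm (a *: x) = cabs a ^+ 2 * sqnorm x.
Proof. by rewrite /sqnorm ipZl ipZr mulrA mulC_conjC Re_realCM. Qed.

Lemma hnormZ a x : N (a *: x) = cabs a * N x.
Proof.
by rewrite /hnorm -/(sqnorm _) sqnormZ sqrtrM ?sqr_ge0 // sqrtr_sqr ger0_norm // cabs_ge0.
Qed.

Lemma hnormN x : N (- x) = N x.
Proof. by rewrite -scaleN1r hnormZ cabs_N1 mul1r. Qed.

Lemma Re_ip_le x y : Re (ip x y) <= N x * N y.
Proof.
have [->|y0] := eqVneq y 0; first by rewrite ip0r hnorm0 mulr0.
have ny := hnorm_gt0 y0.
set r := Re (ip x y); set t := r / N y ^+ 2.
have etr : r = t * N y ^+ 2 by rewrite /t mulfVK // expf_neq0 // gt_eqF.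
have := sqnorm_ge0 (x + (- t)%:C *: y).
rewrite sqnormD sqnormZ ipZr conjC_realC Re_realCM cabs_realC -/r.
rewrite real_normK ?num_real // -!hnorm_sq => h.
have : r ^+ 2 <= (N x * N y) ^+ 2 by rewrite exprMn; rewrite etr in h *; nra.
by have := mulr_ge0 (hnorm_ge0 x) (hnorm_ge0 y); nra.
Qed.

Lemma norm_Re_ip_le x y : `|Re (ip x y)| <= N x * N y.
Proof.
rewrite ler_norml Re_ip_le andbT lerNl -raddfN /= -mulN1r -ipZl scaleN1r.
by rewrite -(hnormN x); apply: Re_ip_le.
Qed.

(** Cauchy-Schwarz for the modulus, up to a factor 2 (enough for boundedness). *)
Lemma cabs_ip_le x y : cabs (ip x y) <= 2 * (N x * N y).
Proof.
apply: le_trans (cabs_le_l1 _) _.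
have -> : complex.Im (ip x y) = Re (ip x ('i%C *: y)).
  by rewrite ipZr conjC_iC Re_NiM.
have := norm_Re_ip_le x y; have := norm_Re_ip_le x ('i%C *: y).
by rewrite hnormZ cabs_iC mul1r; lra.
Qed.

Lemma hnormD_le x y : N (x + y) <= N x + N y.
Proof.
rewrite -[X in _ <= X]ger0_norm ?addr_ge0 ?hnorm_ge0 // -sqrtr_sqr ler_sqrt ?sqr_ge0 //.
by rewrite -/(sqnorm _) sqnormD sqrrD -!hnorm_sq; have := Re_ip_le x y; lra.
Qed.

Lemma hnorm_attained v : exists2 u, N u <= 1 & Re (ip v u) = N v.
Proof.
have [->|v0] := eqVneq v 0; first by exists 0; rewrite ?ip0r ?hnorm0.
have nv := hnorm_gt0 v0; set t := (N v)^-1.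
have t0 : 0 <= t by rewrite invr_ge0 ltW.
exists (t%:C *: v); first by rewrite hnormZ cabs_realC ger0_norm // mulVf ?gt_eqF.
rewrite ipZr conjC_realC Re_realCM -/(sqnorm v) -hnorm_sq.
by rewrite expr2 mulrA mulVf ?gt_eqF // mul1r.
Qed.

Lemma ip_ext u w : (forall v, ip v u = ip v w) -> u = w.
Proof.
by move=> h; apply/eqP; rewrite -subr_eq0; apply/eqP/sqnorm_eq0; rewrite /sqnorm ipBr h subrr.
Qed.

End InnerProduct.

Section Operators.
Variable R : realType.
Variable V : lmodType R[i].
Variable ip : V -> V -> R[i].
Hypothesis hip : is_inner_product ip.
Local Notation N := (hnorm ip).
Implicit Types (S T Ts : V -> V) (x y : V).

Definition linear_op T := forall (a : R[i]) x y, T (a *: x + y) = a *: T x + T y.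

Definition op_le T (M : R) := forall x, N (T x) <= M * N x.

Definition op_bounded T := exists2 M, 0 <= M & op_le T M.

Section Linear.
Variable T : V -> V.
Hypothesis linT : linear_op T.

Lemma linear_opD x y : T (x + y) = T x + T y.
Proof. by rewrite -[x in LHS]scale1r linT scale1r. Qed.

Lemma linear_op0 : T 0 = 0.
Proof. by apply: (addrI (T 0)); rewrite -linear_opD !addr0. Qed.

Lemma linear_opZ a x : T (a *: x) = a *: T x.
Proof. by rewrite -[a *: x]addr0 linT linear_op0 addr0. Qed.

Lemma linear_opB x y : T (x - y) = T x - T y.
Proof. by rewrite -scaleN1r addrC linT scaleN1r addrC. Qed.

End Linear.

Lemma bounded_opP T : bounded_op ip T -> linear_op T /\ op_bounded T.
Proof.
case=> linT [M hM]; split => //; exists (Num.max M 0); first by rewrite le_max lexx orbT.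
by move=> x; apply: le_trans (hM x) _; rewrite ler_wpM2r ?hnorm_ge0 // le_max lexx.
Qed.

Lemma linear_op_add S T : linear_op S -> linear_op T -> linear_op (opadd S T).
Proof. by move=> linS linT a x y; rewrite /opadd linS linT scalerDr addrACA. Qed.

Lemma linear_op_sub S T : linear_op S -> linear_op T -> linear_op (opsub S T).
Proof. by move=> linS linT a x y; rewrite /opsub linS linT scalerBr opprD addrACA. Qed.

Lemma op_bounded_add S T : op_bounded S -> op_bounded T -> op_bounded (opadd S T).
Proof.
case=> a a0 hS [b b0 hT]; exists (a + b); first exact: addr_ge0.
by move=> x; apply: le_trans (hnormD_le hip _ _) _; rewrite mulrDl lerD.
Qed.

Lemma op_bounded_sub S T : op_bounded S -> op_bounded T -> op_bounded (opsub S T).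
Proof.
case=> a a0 hS [b b0 hT]; exists (a + b); first exact: addr_ge0.
move=> x; apply: le_trans (hnormD_le hip _ _) _.
by rewrite (hnormN hip) mulrDl lerD.
Qed.

Lemma adjoint_sym T Ts : is_adjoint ip T Ts -> is_adjoint ip Ts T.
Proof. by move=> adj x y; rewrite ipC // -adj -ipC. Qed.

Lemma adjoint_add S Ss T Ts : is_adjoint ip S Ss -> is_adjoint ip T Ts ->
  is_adjoint ip (opadd S T) (opadd Ss Ts).
Proof. by move=> adjS adjT x y; rewrite /opadd (ipDl hip) (ipDr hip) adjS adjT. Qed.

Lemma adjoint_sub S Ss T Ts : is_adjoint ip S Ss -> is_adjoint ip T Ts ->
  is_adjoint ip (opsub S T) (opsub Ss Ts).
Proof. by move=> adjS adjT x y; rewrite /opsub (ipBl hip) (ipBr hip) adjS adjT. Qed.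

Lemma adjoint_linear T Ts : is_adjoint ip T Ts -> linear_op Ts.
Proof.
move=> adj a x y; apply: (ip_ext hip) => v.
by rewrite -adj (ipDr hip) (ipZr hip) adj (ipDr hip) (ipZr hip) adj.
Qed.

Lemma adjoint_le T Ts M : is_adjoint ip T Ts -> 0 <= M -> op_le T M -> op_le Ts M.
Proof.
move=> adj M0 hT y; have [Ty0|Ty0] := eqVneq (Ts y) 0.
  by rewrite Ty0 (hnorm0 hip) mulr_ge0 ?hnorm_ge0.
have pos := hnorm_gt0 hip Ty0.
have : N (Ts y) ^+ 2 <= M * N (Ts y) * N y.
  rewrite (hnorm_sq hip) /sqnorm -adj; apply: le_trans (Re_ip_le hip _ _) _.
  by rewrite ler_wpM2r ?hnorm_ge0.
by rewrite expr2 => h; rewrite -(ler_pM2l pos); nra.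
Qed.

Lemma opnorm_le T K : (forall x, N x <= 1 -> N (T x) <= K) -> opnorm ip T <= K.
Proof.
move=> hT; apply: ge_sup; first by exists (N (T 0)), 0; rewrite //= (hnorm0 hip).
by move=> _ [x hx <-]; apply: hT.
Qed.

Lemma opnorm_ub T x : op_bounded T -> N x <= 1 -> N (T x) <= opnorm ip T.
Proof.
case=> M M0 hT hx; apply: ub_le_sup; last by exists x.
exists M => _ [y hy <-]; apply: le_trans (hT y) _.
by rewrite -[leRHS]mulr1 ler_wpM2l.
Qed.

Lemma opnorm_ge0 T : op_bounded T -> 0 <= opnorm ip T.
Proof.
by move=> bT; apply: le_trans (opnorm_ub bT (x := 0) _); rewrite ?(hnorm0 hip) ?hnorm_ge0.
Qed.

Lemma opnorm_op_le T : linear_op T -> op_bounded T -> op_le T (opnorm ip T).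
Proof.
move=> linT bT x; have [->|x0] := eqVneq x 0.
  by rewrite linear_op0 // (hnorm0 hip) mulr0.
have pos := hnorm_gt0 hip x0; set t := (N x)^-1.
have t0 : 0 <= t by rewrite invr_ge0 ltW.
have : t * N (T x) <= opnorm ip T.
  rewrite -[t]ger0_norm // -cabs_realC -(hnormZ hip) // -linear_opZ //.
  by apply: opnorm_ub; rewrite // (hnormZ hip) // cabs_realC ger0_norm // mulVf ?gt_eqF.
by rewrite -(ler_pM2l pos) mulrA mulfV ?gt_eqF // mul1r mulrC.
Qed.

Lemma opnorm_half X Y1 Y2 (a b : R) : 0 <= a -> 0 <= b ->
  (forall x, X x + X x = Y1 x + Y2 x) -> op_le Y1 a -> op_le Y2 b ->
  opnorm ip X <= (a + b) / 2.
Proof.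
move=> a0 b0 eX hY1 hY2; apply: opnorm_le => x hx.
have double : N (X x + X x) = 2 * N (X x).
  by rewrite -mulr2n -scaler_nat -(rmorph_nat (real_complex R)) (hnormZ hip) cabs_realC normr_nat.
have := hnormD_le hip (Y1 x) (Y2 x); rewrite -eX double.
have := hY1 x; have := hY2 x; have := hnorm_ge0 ip x.
have : a * N x <= a by rewrite -[leRHS]mulr1 ler_wpM2l.
have : b * N x <= b by rewrite -[leRHS]mulr1 ler_wpM2l.
lra.
Qed.

Lemma opnorm_half_gram X P Ps Q Qs (a b : R) : 0 <= a -> 0 <= b ->
  is_adjoint ip P Ps -> is_adjoint ip Q Qs -> op_le P a -> op_le Q b ->
  (forall x, X x + X x = Ps (P x) + Qs (Q x)) ->
  opnorm ip X <= (a ^+ 2 + b ^+ 2) / 2.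
Proof.
move=> a0 b0 adjP adjQ hP hQ eX.
have gram_le T Ts c : is_adjoint ip T Ts -> 0 <= c -> op_le T c ->
    op_le (fun x => Ts (T x)) (c ^+ 2).
  move=> adj c0 hT x; apply: le_trans (adjoint_le adj c0 hT _) _.
  by rewrite expr2 -mulrA ler_wpM2l.
by apply: opnorm_half eX (gram_le _ _ _ _ _ _) (gram_le _ _ _ _ _ _); rewrite ?sqr_ge0.
Qed.

End Operators.

Section NumericalRadius.
Variable R : realType.
Variable V : lmodType R[i].
Variable ip : V -> V -> R[i].
Hypothesis hip : is_inner_product ip.
Variable A : V -> V.
Hypothesis linA : linear_op A.
Hypothesis bA : op_bounded ip A.
Local Notation N := (hnorm ip).
Local Notation w := (numrad ip N A).
Local Open Scope classical_set_scope.

Let values := [set cabs (ip (A x) x) | x in [set x | N x = 1]].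

Lemma numrad_values_ub : has_ubound values.
Proof.
case: bA => M M0 hA; exists (2 * M) => _ [x /= x1 <-].
apply: le_trans (cabs_ip_le hip _ _) _.
by rewrite x1 mulr1 ler_wpM2l // -[leRHS]mulr1 -x1 hA.
Qed.

Lemma numrad_ge0 : 0 <= w.
Proof.
have [[y vy]|empty] := pselect (values !=set0).
  apply: le_trans (ub_le_sup numrad_values_ub vy).
  by case: vy => x _ <-; apply: cabs_ge0.
suff empty_values : values = set0 by rewrite /numrad -/values empty_values sup0.
by apply/seteqP; split => // y vy; apply: empty; exists y.
Qed.

Lemma numrad_le x : cabs (ip (A x) x) <= w * sqnorm ip x.
Proof.
have [->|x0] := eqVneq x 0.
  by rewrite (ip0r hip) cabs0 mulr_ge0 ?numrad_ge0 ?sqnorm_ge0.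
have pos := hnorm_gt0 hip x0; set t := (N x)^-1.
have t0 : 0 <= t by rewrite invr_ge0 ltW.
have tN : t * N x = 1 by rewrite mulVf ?gt_eqF.
have : cabs (ip (A (t%:C *: x)) (t%:C *: x)) <= w.
  rewrite /numrad -/values; apply: (ub_le_sup numrad_values_ub); exists (t%:C *: x) => //=.
  by rewrite (hnormZ hip) cabs_realC ger0_norm.
rewrite (linear_opZ linA) (ipZl hip) (ipZr hip) conjC_realC mulrA -rmorphM /=.
rewrite cabsM cabs_realC ger0_norm ?mulr_ge0 // -(hnorm_sq hip) => h.
have unit : t * t * cabs (ip (A x) x) * N x ^+ 2 = cabs (ip (A x) x).
  by rewrite -[RHS]mul1r -(expr1n _ 2) -tN; ring.
by rewrite -unit ler_wpM2r ?sqr_ge0.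
Qed.

End NumericalRadius.

Section DirectSum.
Variable R : realType.
Variable H : lmodType R[i].
Variable ip : H -> H -> R[i].
Hypothesis hip : is_inner_product ip.
Local Notation N := (hnorm ip).
Local Notation N2 := (hnorm (ip2 ip)).

Lemma ip2_inner_product : is_inner_product (ip2 ip).
Proof.
have [_ _ ge0 def0] := hip; split.
- by move=> a x y z; rewrite /ip2 /= !(ipDl hip) !(ipZl hip) mulrDr addrACA.
- by move=> x y; rewrite /ip2 rmorphD /= -!(ipC hip).
- by move=> x; rewrite /ip2 addr_ge0.
- case=> x1 x2; rewrite /ip2 /= => /eqP; rewrite paddr_eq0 // => /andP[/eqP ? /eqP ?].
  by congr (_, _); apply: def0.
Qed.

Lemma hnorm2_sq x : N2 x ^+ 2 = N x.1 ^+ 2 + N x.2 ^+ 2.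
Proof. by rewrite (hnorm_sq ip2_inner_product) !(hnorm_sq hip) /sqnorm raddfD. Qed.

Lemma opmx_linear B C : linear_op B -> linear_op C ->
  linear_op (opmx (@opzero R H) B C (@opzero R H)).
Proof.
move=> linB linC a x y; rewrite /opmx /opzero /= !add0r !addr0.
by rewrite linB linC.
Qed.

Lemma opmx_bounded B C : op_bounded ip B -> op_bounded ip C ->
  op_bounded (ip2 ip) (opmx (@opzero R H) B C (@opzero R H)).
Proof.
case=> b b0 hB [c c0 hC]; exists (b + c) => [|x]; first exact: addr_ge0.
set T := opmx _ B C _.
rewrite -ler_sqr ?nnegrE ?hnorm_ge0 ?mulr_ge0 ?addr_ge0 ?hnorm_ge0 //.
rewrite exprMn !hnorm2_sq /T /opmx /opzero /= add0r addr0.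
have sqB : N (B x.2) ^+ 2 <= (b * N x.2) ^+ 2.
  by rewrite lerXn2r ?nnegrE ?hnorm_ge0 ?mulr_ge0 ?hnorm_ge0.
have sqC : N (C x.1) ^+ 2 <= (c * N x.1) ^+ 2.
  by rewrite lerXn2r ?nnegrE ?hnorm_ge0 ?mulr_ge0 ?hnorm_ge0.
have hb : (b * N x.2) ^+ 2 <= ((b + c) * N x.2) ^+ 2.
  by rewrite !exprMn ler_wpM2r ?sqr_ge0 // lerXn2r ?nnegrE ?addr_ge0 // lerDl.
have hc : (c * N x.1) ^+ 2 <= ((b + c) * N x.1) ^+ 2.
  by rewrite !exprMn ler_wpM2r ?sqr_ge0 // lerXn2r ?nnegrE ?addr_ge0 // lerDr.
rewrite !exprMn in hb hc; lra.
Qed.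

End DirectSum.

Lemma max_sq_add_mul_le (F : realFieldType) (p m w : F) : 0 <= p -> 0 <= m ->
  p <= 2 * w -> m <= 2 * w -> Num.max (p ^+ 2) (m ^+ 2) + p * m <= 8 * w ^+ 2.
Proof.
move=> p0 m0 pw mw; have maxle : Num.max (p ^+ 2) (m ^+ 2) <= 4 * w ^+ 2.
  by rewrite ge_max; apply/andP; split; nra.
have : p * m <= 4 * w ^+ 2 by nra.
lra.
Qed.

Lemma sum_sq_le_max_sq_add_mul (F : realFieldType) (p m : F) : 0 <= p -> 0 <= m ->
  p ^+ 2 + m ^+ 2 <= Num.max (p ^+ 2) (m ^+ 2) + p * m.
Proof.
move=> p0 m0; have [pm|mp] := leP p m.
  have : m ^+ 2 <= Num.max (p ^+ 2) (m ^+ 2) by rewrite le_max lexx orbT.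
  have : p * p <= p * m by rewrite ler_wpM2l.
  by rewrite expr2; lra.
have : p ^+ 2 <= Num.max (p ^+ 2) (m ^+ 2) by rewrite le_max lexx.
have : m * m <= p * m by rewrite ler_wpM2r // ltW.
by rewrite expr2; lra.
Qed.

(** [2 (a + d) = ((a + b) + (c + d)) + ((a - b) - (c - d))]: the algebra behind
    [2 (Bs B + C Cs) = (Bs + C)(B + Cs) + (Bs - C)(B - Cs)]. *)
Lemma double_sum_diff (M : zmodType) (a b c d : M) :
  (a + d) + (a + d) = (a + b + (c + d)) + ((a - b) - (c - d)).
Proof.
rewrite opprB addrACA [RHS]addrACA [a + b + _]addrACA subrr addr0.
by rewrite [c + d]addrC [d + c + _]addrACA subrr addr0.
Qed.

Section OffDiagonal.
Variable R : realType.
Variable H : lmodType R[i].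
Variable ip : H -> H -> R[i].
Hypothesis hip : is_inner_product ip.
Variables B C Bs Cs : H -> H.
Hypotheses (linB : linear_op B) (linC : linear_op C).
Hypotheses (bB : op_bounded ip B) (bC : op_bounded ip C).
Hypotheses (adjB : is_adjoint ip B Bs) (adjC : is_adjoint ip C Cs).
Local Notation N := (hnorm ip).
Local Notation Re := complex.Re.
Local Notation w := (numrad (ip2 ip) (hnorm (ip2 ip)) (opmx (@opzero R H) B C (@opzero R H))).
Local Notation p := (opnorm ip (opadd B Cs)).
Local Notation m := (opnorm ip (opsub B Cs)).

Let linBs : linear_op Bs := adjoint_linear hip adjB.
Let linCs : linear_op Cs := adjoint_linear hip adjC.
Let adjCs : is_adjoint ip Cs C := adjoint_sym hip adjC.
Let bCs : op_bounded ip Cs.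
Proof. by case: bC => c c0 hC; exists c; last exact: adjoint_le adjC c0 hC. Qed.
Let adjP : is_adjoint ip (opadd B Cs) (opadd Bs C) := adjoint_add hip adjB adjCs.
Let adjQ : is_adjoint ip (opsub B Cs) (opsub Bs C) := adjoint_sub hip adjB adjCs.
Let boundP : op_le ip (opadd B Cs) p :=
  opnorm_op_le hip (linear_op_add linB linCs) (op_bounded_add hip bB bCs).
Let boundQ : op_le ip (opsub B Cs) m :=
  opnorm_op_le hip (linear_op_sub linB linCs) (op_bounded_sub hip bB bCs).
Let p0 : 0 <= p := opnorm_ge0 hip (op_bounded_add hip bB bCs).
Let m0 : 0 <= m := opnorm_ge0 hip (op_bounded_sub hip bB bCs).

Lemma offdiag_numrad_ge0 : 0 <= w.
Proof. exact: (numrad_ge0 (ip2_inner_product hip) (opmx_bounded hip bB bC)). Qed.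

(** The quadratic form of [[0 B; C 0]] at [(u, z)] is [<B z, u> + <u, Cs z>]. *)
Lemma offdiag_form_le u z :
  cabs (ip (B z) u + ip u (Cs z)) <= w * (sqnorm ip u + sqnorm ip z).
Proof.
have := numrad_le (ip2_inner_product hip) (opmx_linear linB linC)
  (opmx_bounded hip bB bC) (u, z).
by rewrite /ip2 /opmx /opzero /= add0r addr0 adjC /sqnorm raddfD.
Qed.

Lemma offdiag_form_le_unit u z : N u <= 1 -> N z <= 1 ->
  cabs (ip (B z) u + ip u (Cs z)) <= 2 * w.
Proof.
move=> u1 z1; apply: le_trans (offdiag_form_le u z) _.
have sq_le1 v : N v <= 1 -> sqnorm ip v <= 1.
  by move=> v1; rewrite -(hnorm_sq hip) expr_le1 ?hnorm_ge0.
rewrite mulrC ler_wpM2r ?offdiag_numrad_ge0 //.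
by have := sq_le1 _ u1; have := sq_le1 _ z1; lra.
Qed.

(** [||B + Cs|| <= 2 w]: test [(B + Cs) z] against a unit vector norming it. *)
Lemma opnorm_add_adjoint_le : p <= 2 * w.
Proof.
apply: (opnorm_le hip) => z z1; have [u u1 <-] := hnorm_attained hip (opadd B Cs z).
rewrite /opadd (ipDl hip) raddfD /= (Re_ipC hip (Cs z)) -raddfD /=.
exact: le_trans (Re_le_cabs _) (offdiag_form_le_unit u1 z1).
Qed.

(** [||B - Cs|| <= 2 w]: the same with the test vector rotated by [-i]. *)
Lemma opnorm_sub_adjoint_le : m <= 2 * w.
Proof.
apply: (opnorm_le hip) => z z1; have [u u1 <-] := hnorm_attained hip (opsub B Cs z).
have rotate : ip (B z) (- 'i%C *: u) + ip (- 'i%C *: u) (Cs z)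
    = 'i%C * (ip (B z) u - ip u (Cs z)).
  by rewrite (ipZr hip) (ipZl hip) rmorphN /= conjC_iC opprK; ring.
have : cabs (ip (B z) (- 'i%C *: u) + ip (- 'i%C *: u) (Cs z)) <= 2 * w.
  by apply: offdiag_form_le_unit; rewrite // (hnormZ hip) cabs_NiC mul1r.
rewrite rotate cabsM cabs_iC mul1r; apply: le_trans.
by rewrite /opsub (ipBl hip) raddfB /= (Re_ipC hip (Cs z)) -raddfB /= Re_le_cabs.
Qed.

Lemma first_inequality : 8^-1 * (Num.max (p ^+ 2) (m ^+ 2) + p * m) <= w ^+ 2.
Proof.
rewrite ler_pdivrMl //.
exact: max_sq_add_mul_le p0 m0 opnorm_add_adjoint_le opnorm_sub_adjoint_le.
Qed.

(** [2 (Bs B + C Cs) = (Bs + C)(B + Cs) + (Bs - C)(B - Cs)], where [Bs + C]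
    and [Bs - C] are the adjoints of [B + Cs] and [B - Cs];
    hence [||Bs B + C Cs|| <= (p^2 + m^2) / 2]. *)
Lemma opnorm_gram_le : opnorm ip (opadd (opcomp Bs B) (opcomp C Cs)) <= (p ^+ 2 + m ^+ 2) / 2.
Proof.
apply: (opnorm_half_gram hip p0 m0 adjP adjQ boundP boundQ) => x.
rewrite /opadd /opsub /opcomp (linear_opD linBs) (linear_opD linC).
by rewrite (linear_opB linBs) (linear_opB linC); apply: double_sum_diff.
Qed.

(** Symmetrically [2 (B Bs + Cs C) = (B + Cs)(Bs + C) + (B - Cs)(Bs - C)],
    where [||Bs + C|| <= p] and [||Bs - C|| <= m] by passing to adjoints. *)
Lemma opnorm_cogram_le :
  opnorm ip (opadd (opcomp B Bs) (opcomp Cs C)) <= (p ^+ 2 + m ^+ 2) / 2.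
Proof.
apply: (opnorm_half_gram hip p0 m0 (adjoint_sym hip adjP) (adjoint_sym hip adjQ)
  (adjoint_le hip adjP p0 boundP) (adjoint_le hip adjQ m0 boundQ)) => x.
rewrite /opadd /opsub /opcomp (linear_opD linB) (linear_opD linCs).
by rewrite (linear_opB linB) (linear_opB linCs); apply: double_sum_diff.
Qed.

Lemma second_inequality :
  4^-1 * Num.max (opnorm ip (opadd (opcomp Bs B) (opcomp C Cs)))
                 (opnorm ip (opadd (opcomp B Bs) (opcomp Cs C)))
  <= 8^-1 * (Num.max (p ^+ 2) (m ^+ 2) + p * m).
Proof.
have : Num.max (opnorm ip (opadd (opcomp Bs B) (opcomp C Cs)))
               (opnorm ip (opadd (opcomp B Bs) (opcomp Cs C))) <= (p ^+ 2 + m ^+ 2) / 2.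
  by rewrite ge_max opnorm_gram_le opnorm_cogram_le.
by have := sum_sq_le_max_sq_add_mul p0 m0; lra.
Qed.

End OffDiagonal.

Theorem mainTheorem6 (R : realType) (H : lmodType R[i]) (ip : H -> H -> R[i])
  (B C Bs Cs : H -> H) :
  is_hilbert ip ->
  bounded_op ip B -> bounded_op ip C ->
  is_adjoint ip B Bs -> is_adjoint ip C Cs ->
  let w := numrad (ip2 ip) (hnorm2 ip) (opmx (@opzero R H) B C (@opzero R H)) in
  let p := opnorm ip (opadd B Cs) in
  let m := opnorm ip (opsub B Cs) in
  let mid := 8^-1 * (Num.max (p ^+ 2) (m ^+ 2) + p * m) in
  w ^+ 2 >= mid /\
  mid >= 4^-1 * Num.max (opnorm ip (opadd (opcomp Bs B) (opcomp C Cs)))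
                        (opnorm ip (opadd (opcomp B Bs) (opcomp Cs C))).
Proof.
move=> [hip _] /bounded_opP[linB bB] /bounded_opP[linC bC] adjB adjC /=.
split; first exact: (first_inequality hip linB linC bB bC adjC).
exact: (second_inequality hip linB linC bB bC adjB adjC).
Qed.
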